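(* Let $S$ be a finite set with a partition $S=S_0\cup\dots\cup S_n$, let $Q$ be a poset with elements $a_1,\dots,a_l$, and let $f_1,\dots,f_r$ be all the functions from $\{a_1,\dots,a_l\}$ to $\{S_0,\dots,S_n\}$. For each $i$ let $\mathcal{S}_i$ be an arbitrary family of $l$-element subsets of $S$, each having one element in $f_i(a_j)$ for every $1\le j\le l$, and suppose (after reindexing) that $\mathcal{S}_1,\dots,\mathcal{S}_{r'}$ are exactly the nonempty ones. Let $\underline{t}=(t_1,\dots,t_{r'})$ be a vector of positive integers and $\underline{w}=(w_1,\dots,w_{r'})$ a vector of non-negative reals. Let $T$ be a hereditary property of subsets of $S$ and let $\Gamma$ be an $(l,\underline{t})$-covering family of $S$. Assume that for every $G\in\Gamma$, every subset $G'\subseteq G$ with property $T$ satisfies $\underline{w/t}(G')\le x$. Then $\underline{w}(F)\le|\Gamma|\,x$ for every $F\subseteq S$ with property $T$.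
   Context: A property $T$ of subsets of $S$ is hereditary if every subset of a set with property $T$ has property $T$. A family $\Gamma$ of subsets of $S$ is $(l,\underline{t})$-covering if for each $1\le i\le r'$ and each $l$-set in $\mathcal{S}_i$, exactly $t_i$ members of $\Gamma$ contain all elements of that $l$-set. For $F\subseteq S$, let $f_i(F)$ be the number of $l$-sets in $\mathcal{S}_i$ all of whose elements lie in $F$, and define $\underline{w}(F)=\sum_{i=1}^{r'} w_i f_i(F)$; $\underline{w/t}$ denotes the weight vector $(w_1/t_1,\dots,w_{r'}/t_{r'})$, so $\underline{w/t}(F)=\sum_{i=1}^{r'}\frac{w_i}{t_i}f_i(F)$. *)

From HB Require Import structures.
From mathcomp Require Import all_boot all_order all_algebra.
Set Implicit Arguments. Unset Strict Implicit. Unset Printing Implicit Defensive.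
Import Order.TTheory GRing.Theory Num.Theory.
Local Open Scope ring_scope.

(* The partition S = S_0 u ... u S_n is given by a block map part : S -> 'I_n.+1
   (S_k = [set s | part s == k]).  The poset Q = {a_1,...,a_l} is a finite type;
   the functions f_1,...,f_r : Q -> {S_0..S_n} are the elements of {ffun Q -> 'I_n.+1}. *)

Definition admissible (S Q : finType) (n : nat) (part : S -> 'I_n.+1)
  (f : {ffun Q -> 'I_n.+1}) (A : {set S}) : Prop :=
  exists g : Q -> S, [/\ injective g, A = g @: [set: Q] & forall a, part (g a) = f a].

Definition hereditary (S : finType) (T : {set S} -> Prop) : Prop :=
  forall A B : {set S}, B \subset A -> T A -> T B.

Definition fcount (S : finType) (I : finType) (fam : I -> {set {set S}}) (i : I)
  (F : {set S}) : nat := #|[set A in fam i | A \subset F]|.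

(* Gamma (a family of subsets of S, possibly with repetitions) is (l,t)-covering:
   for every nonempty family S_i and every A in S_i, exactly t_i members of Gamma contain A. *)
Definition covering (S : finType) (I : finType) (fam : I -> {set {set S}})
  (t : I -> nat) (Gamma : seq {set S}) : Prop :=
  forall i, fam i != set0 -> forall A, A \in fam i -> count (fun G : {set S} => A \subset G) Gamma = t i.

Definition wgt (R : numDomainType) (S : finType) (I : finType) (fam : I -> {set {set S}})
  (w : I -> R) (F : {set S}) : R :=
  \sum_(i | fam i != set0) w i * (fcount fam i F)%:R.

Definition wgt_t (R : numFieldType) (S : finType) (I : finType) (fam : I -> {set {set S}})
  (w : I -> R) (t : I -> nat) (F : {set S}) : R :=
  \sum_(i | fam i != set0) (w i / (t i)%:R) * (fcount fam i F)%:R.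

From HB Require Import structures.
From mathcomp Require Import all_boot all_order all_algebra.
Set Implicit Arguments. Unset Strict Implicit. Unset Printing Implicit Defensive.
Import Order.TTheory GRing.Theory Num.Theory.
Local Open Scope ring_scope.

(* Double counting: every l-set of a nonempty family S_i lies in exactly t_i
   members of Gamma, so summing f_i(F :&: G) over G in Gamma gives t_i f_i(F),
   that is w(F) = \sum_(G in Gamma) (w/t)(F :&: G).  Each F :&: G is a subset of
   G with property T, so every term is at most x. *)

Section DoubleCounting.

Variables (S I : finType) (fam : I -> {set {set S}}).

Lemma fcount_setI i F G :
  fcount fam i (F :&: G) = (\sum_(A in fam i | A \subset F) (A \subset G))%N.
Proof.
rewrite /fcount -sum1dep_card !big_mkcondr /=.
by apply: eq_bigr => A _; rewrite subsetI; case: (A \subset F); case: (A \subset G).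
Qed.

Lemma sum_fcount_setI t Gamma i F :
  covering fam t Gamma -> fam i != set0 ->
  (\sum_(G <- Gamma) fcount fam i (F :&: G))%N = (fcount fam i F * t i)%N.
Proof.
move=> cover_Gamma ne_i.
under eq_bigr do rewrite fcount_setI.
rewrite exchange_big /= /fcount -sum_nat_const.
apply: eq_big => [A | A /andP[famA _]]; first by rewrite inE.
rewrite -(cover_Gamma i ne_i A famA) -sum1_count [RHS]big_mkcond.
by apply: eq_bigr => G _; case: (A \subset G).
Qed.

Lemma wgt_sum_wgt_t (R : numFieldType) (w : I -> R) t Gamma F :
  covering fam t Gamma -> (forall i, fam i != set0 -> 0 < t i)%N ->
  wgt fam w F = \sum_(G <- Gamma) wgt_t fam w t (F :&: G).
Proof.
move=> cover_Gamma t_gt0.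
rewrite /wgt /wgt_t exchange_big /=; apply: eq_bigr => i ne_i.
rewrite -mulr_sumr -natr_sum (sum_fcount_setI F cover_Gamma ne_i).
rewrite natrM mulrCA divfK; first exact: mulrC.
by rewrite pnatr_eq0 -lt0n t_gt0.
Qed.

End DoubleCounting.

Lemma ler_sum_seq_const (R : numDomainType) (T : eqType) (r : seq T)
    (y : T -> R) (x : R) :
  {in r, forall z, y z <= x} -> \sum_(z <- r) y z <= x *+ size r.
Proof.
move=> le_yx; rewrite -count_predT -iter_addr_0 -big_const_seq.
by rewrite big_seq [X in _ <= X]big_seq; apply: ler_sum.
Qed.

Theorem lemma4p1 (R : realFieldType) (S : finType) (n : nat) (part : S -> 'I_n.+1)
  (d : Order.disp_t) (Q : finPOrderType d)
  (fam : {ffun Q -> 'I_n.+1} -> {set {set S}})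
  (Hfam : forall f A, A \in fam f -> admissible part f A)
  (t : {ffun Q -> 'I_n.+1} -> nat) (w : {ffun Q -> 'I_n.+1} -> R)
  (Ht : forall f, fam f != set0 -> (0 < t f)%N)
  (Hw : forall f, fam f != set0 -> 0 <= w f)
  (T : {set S} -> Prop) (HT : hereditary T)
  (Gamma : seq {set S}) (HG : covering fam t Gamma) (x : R)
  (Hx : forall G, G \in Gamma -> forall G' : {set S}, G' \subset G -> T G' ->
          wgt_t fam w t G' <= x) :
  forall F : {set S}, T F -> wgt fam w F <= (size Gamma)%:R * x.
Proof.
move=> F TF.
rewrite (wgt_sum_wgt_t w F HG Ht) mulr_natl.
apply: ler_sum_seq_const => G Gamma_G.
apply: (Hx G Gamma_G); first exact: subsetIr.
exact: HT (subsetIl F G) TF.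
Qed.
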